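(* Let $\kappa>0$ be an ordinal. For each $\alpha<\kappa$, let $L_\alpha$ be a set equipped with two partial orders $\le$ and $\preceq$, each of which makes $L_\alpha$ a complete lattice. Let $L=\prod_{\alpha<\kappa}L_\alpha$ with the pointwise order $x\le y$ iff $x(\alpha)\le y(\alpha)$ for all $\alpha<\kappa$. For $\alpha<\kappa$ define $x\sqsubseteq_\alpha y$ iff $x(\beta)=y(\beta)$ for all $\beta<\alpha$ and $x(\alpha)\preceq y(\alpha)$. Then $(L,\le,(\sqsubseteq_\alpha)_{\alpha<\kappa})$ satisfies Axiom 3 if and only if for every $\alpha<\kappa$ and all $a,b\in L_\alpha$, $a\preceq b$ implies $a\le b$. (In that case the structure is a model of Axioms 1–4, since Axioms 1, 2 and 4 always hold for this construction.)
   Context: Conventions. $x=_\alpha y$ means $x\sqsubseteq_\alpha y$ and $y\sqsubseteq_\alpha x$. For $x\in L$, $(x]_\alpha=\{y\in L:\forall\beta<\alpha,\ x=_\beta y\}$. For a set $X$, $X\sqsubseteq_\alpha y$ means $x\sqsubseteq_\alpha y$ for all $x\in X$. Axiom 3: for every $x\in L$, every $\alpha<\kappa$ and every $X\subseteq(x]_\alpha$ there is $y\in(x]_\alpha$ with $X\sqsubseteq_\alpha y$ such that for all $z\in(x]_\alpha$ with $X\sqsubseteq_\alpha z$ we have $y\sqsubseteq_\alpha z$ and $y\le z$. The other axioms: - (A1) for all $\alpha<\beta<\kappa$, $x\sqsubseteq_\beta y$ implies $x=_\alpha y$; - (A2) $\bigcap_{\alpha<\kappa}=_\alpha$ is the identity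 relation on $L$; - (A4) for every nonempty $X\subseteq L$, every $\alpha<\kappa$ and every $y\in L$, if $y=_\alpha x$ for all $x\in X$ then $y=_\alpha\bigvee X$, where $\bigvee$ is the join for $\le$. *)

From Stdlib Require Import Classical FunctionalExtensionality.

(* A strict well-order on an index type I: stands for the ordinal kappa,
   with [lt] the ordinal order on the elements alpha < kappa. *)
Definition is_wellorder (I : Type) (lt : I -> I -> Prop) : Prop :=
  (forall a, ~ lt a a) /\
  (forall a b c, lt a b -> lt b c -> lt a c) /\
  (forall a b, lt a b \/ a = b \/ lt b a) /\
  well_founded lt.

Definition is_lub {T : Type} (le : T -> T -> Prop) (S : T -> Prop) (s : T) : Prop :=
  (forall x, S x -> le x s) /\ (forall u, (forall x, S x -> le x u) -> le s u).

Definition complete_lattice_order {T : Type} (le : T -> T -> Prop) : Prop :=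
  (forall x, le x x) /\
  (forall x y z, le x y -> le y z -> le x z) /\
  (forall x y, le x y -> le y x -> x = y) /\
  (forall S : T -> Prop, exists s, is_lub le S s).

Section Product.
Context {I : Type} (lt : I -> I -> Prop) (L : I -> Type)
        (le prec : forall a, L a -> L a -> Prop).

Definition prodT := forall a : I, L a.

Definition leL (x y : prodT) : Prop := forall a, le a (x a) (y a).

Definition sqle (a : I) (x y : prodT) : Prop :=
  (forall b, lt b a -> x b = y b) /\ prec a (x a) (y a).

Definition sqeq (a : I) (x y : prodT) : Prop := sqle a x y /\ sqle a y x.

Definition down (x : prodT) (a : I) : prodT -> Prop :=
  fun y => forall b, lt b a -> sqeq b x y.

Definition Axiom1 : Prop :=
  forall a b x y, lt a b -> sqle b x y -> sqeq a x y.

Definition Axiom2 : Prop :=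
  forall x y, (forall a, sqeq a x y) <-> x = y.

Definition Axiom3 : Prop :=
  forall (x : prodT) (a : I) (X : prodT -> Prop),
    (forall z, X z -> down x a z) ->
    exists y, down x a y /\ (forall z, X z -> sqle a z y) /\
      (forall z, down x a z -> (forall w, X w -> sqle a w z) ->
                 sqle a y z /\ leL y z).

(* Axiom 4, with the join of X in (L, <=) taken as any least upper bound of X
   (which is unique by antisymmetry). *)
Definition Axiom4 : Prop :=
  forall (X : prodT -> Prop) (a : I) (y j : prodT),
    (exists x, X x) -> is_lub leL X j ->
    (forall x, X x -> sqeq a y x) -> sqeq a y j.

End Product.

From Stdlib Require Import Classical ClassicalEpsilon FunctionalExtensionality ProofIrrelevance.

(* In the lexicographic product, x =_α y holds exactly when x and y
   agree at every index β ≤ α (as ⪯ is antisymmetric), so (x]_α is the set of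
   points agreeing with x strictly below α.  Axioms 1, 2 and 4 follow directly
   from this description; for Axiom 4 one compares the join j of X with the
   point that copies y up to α and j afterwards.
   For Axiom 3, given X ⊆ (x]_α, the candidate y copies x below α, takes the
   ⪯-supremum of the α-coordinates of X at α, and the ≤-bottom above α.  It is
   always the ⊑_α-least ⊑_α-upper bound of X; it is also ≤ every such bound z
   precisely when the ⪯-inequality y(α) ⪯ z(α) forces y(α) ≤ z(α).
   Conversely, applying Axiom 3 to X = {w}, where w and z differ only at α with
   w(α) = u ⪯ v = z(α), yields a y with y(α) = u and y ≤ z, hence u ≤ v.
   The file first builds two pointwise constructions (patching two points along
   a predicate, updating one coordinate), then the description of =_α and
   (x]_α, then the axioms, and finally the theorem. *)

Definition patch {I : Type} {L : I -> Type} (P : I -> Prop) (x y : forall d, L d) :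
  forall d, L d :=
  fun d => if excluded_middle_informative (P d) then x d else y d.

Lemma patch_in {I : Type} {L : I -> Type} (P : I -> Prop) (x y : forall d, L d) d :
  P d -> patch P x y d = x d.
Proof.
  intro Hd. unfold patch. destruct (excluded_middle_informative (P d)); tauto.
Qed.

Lemma patch_out {I : Type} {L : I -> Type} (P : I -> Prop) (x y : forall d, L d) d :
  ~ P d -> patch P x y d = y d.
Proof.
  intro Hd. unfold patch. destruct (excluded_middle_informative (P d)); tauto.
Qed.

Definition update {I : Type} {L : I -> Type} (f : forall d, L d) (a : I) (u : L a) :
  forall d, L d :=
  fun d => match excluded_middle_informative (a = d) with
           | left e => eq_rect a L u d e
           | right _ => f d
           end.

Lemma update_same {I : Type} {L : I -> Type} (f : forall d, L d) (a : I) (u : L a) :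
  update f a u a = u.
Proof.
  unfold update. destruct (excluded_middle_informative (a = a)) as [e|n].
  - rewrite (proof_irrelevance _ e eq_refl). reflexivity.
  - congruence.
Qed.

Lemma update_other {I : Type} {L : I -> Type} (f : forall d, L d) (a d : I) (u : L a) :
  a <> d -> update f a u d = f d.
Proof.
  intro Hne. unfold update. destruct (excluded_middle_informative (a = d)); congruence.
Qed.

Lemma pointwise_choice {I : Type} {L : I -> Type} (P : forall d, L d -> Prop) :
  (forall d, exists t, P d t) -> exists f : forall d, L d, forall d, P d (f d).
Proof.
  intro H. exists (fun d => proj1_sig (constructive_indefinite_description _ (H d))).
  intro d. exact (proj2_sig (constructive_indefinite_description _ (H d))).
Qed.

Section LexProduct.

Variables (I : Type) (lt : I -> I -> Prop) (L : I -> Type)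
          (le prec : forall a, L a -> L a -> Prop).

Hypothesis lt_irrefl : forall a, ~ lt a a.
Hypothesis lt_trans : forall a b c, lt a b -> lt b c -> lt a c.
Hypothesis prec_refl : forall a t, prec a t t.
Hypothesis prec_antisym : forall a t u, prec a t u -> prec a u t -> t = u.

Definition agree_through (a : I) (x y : prodT L) : Prop :=
  forall c, lt c a \/ c = a -> x c = y c.

Lemma sqeq_agree_through a x y : sqeq lt L prec a x y <-> agree_through a x y.
Proof.
  split.
  - intros [[Hbelow Hxy] [_ Hyx]] c [Hc | ->].
    + exact (Hbelow c Hc).
    + exact (prec_antisym a _ _ Hxy Hyx).
  - intros Hagree.
    assert (Hbelow : forall c, lt c a -> x c = y c) by (intros c Hc; apply Hagree; auto).
    unfold sqeq, sqle. rewrite <- (Hagree a (or_intror eq_refl)).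
    repeat split; auto. intros c Hc. symmetry. auto.
Qed.

Lemma down_agree_below x a z : down lt L prec x a z <-> (forall c, lt c a -> z c = x c).
Proof.
  split.
  - intros Hz c Hc. symmetry. apply (proj1 (sqeq_agree_through c x z) (Hz c Hc)). auto.
  - intros Hz b Hb. apply sqeq_agree_through. intros c [Hc | ->]; symmetry; eauto.
Qed.

Lemma axiom1_holds : Axiom1 lt L prec.
Proof.
  intros a b x y Hab [Hbelow _]. apply sqeq_agree_through.
  intros c [Hc | ->]; eauto.
Qed.

Lemma axiom2_holds : Axiom2 lt L prec.
Proof.
  intros x y. split.
  - intro H. apply functional_extensionality_dep. intro a.
    apply (proj1 (sqeq_agree_through a x y) (H a)). auto.
  - intros <- a. apply sqeq_agree_through. intros c _. reflexivity.
Qed.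

Hypothesis le_refl : forall a t, le a t t.

(* If y =_α x for all x in X, then the join j of X also agrees with y through α:
   the point copying y through α and j afterwards bounds X, so j lies below it. *)
Lemma axiom4_holds (le_antisym : forall a t u, le a t u -> le a u t -> t = u) :
  Axiom4 lt L le prec.
Proof.
  intros X a y j [x0 Hx0] [Hub Hleast] HX.
  pose (through := fun d => lt d a \/ d = a).
  assert (Hagree : forall x, X x -> agree_through a y x)
    by (intros x Hx; apply sqeq_agree_through; auto).
  assert (Hbound : leL L le j (patch through y j)).
  { apply Hleast. intros x Hx d.
    destruct (classic (through d)) as [Hd | Hd].
    - rewrite patch_in, (Hagree x Hx d Hd) by exact Hd. apply le_refl.
    - rewrite patch_out by exact Hd. exact (Hub x Hx d). }
  apply sqeq_agree_through. intros c Hc. apply le_antisym.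
  - rewrite (Hagree x0 Hx0 c Hc). exact (Hub x0 Hx0 c).
  - specialize (Hbound c). rewrite patch_in in Hbound by exact Hc. exact Hbound.
Qed.

(* Sufficiency: if ⪯ implies ≤ coordinatewise, the candidate built from x below
   α, the ⪯-supremum at α and the ≤-bottom above α witnesses Axiom 3. *)
Lemma axiom3_of_prec_le
  (lt_total : forall a b, lt a b \/ a = b \/ lt b a)
  (le_bottom : forall d, exists b, forall t, le d b t)
  (prec_sup : forall d (S : L d -> Prop), exists s, is_lub (prec d) S s)
  (prec_le : forall a u v, prec a u v -> le a u v) :
  Axiom3 lt L le prec.
Proof.
  intros x a X HX.
  destruct (pointwise_choice _ le_bottom) as [bot Hbot].
  destruct (pointwise_choice _ (fun d => prec_sup d (fun t => exists z, X z /\ z d = t)))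
    as [s Hs].
  destruct (Hs a) as [Hs_ub Hs_least].
  pose (y := patch (fun d => lt d a) x (patch (fun d => lt a d) bot s)).
  assert (y_below : forall d, lt d a -> y d = x d) by (intros; apply patch_in; auto).
  assert (y_at : y a = s a)
    by (unfold y; rewrite !patch_out; auto).
  assert (y_above : forall d, lt a d -> y d = bot d).
  { intros d Hd. unfold y. rewrite patch_out, patch_in; auto.
    intro Hda. exact (lt_irrefl a (lt_trans _ _ _ Hd Hda)). }
  assert (Hdown_y : down lt L prec x a y) by (apply down_agree_below; exact y_below).
  assert (agree_y : forall z, down lt L prec x a z -> forall c, lt c a -> y c = z c).
  { intros z Hz c Hc. rewrite y_below, (proj1 (down_agree_below x a z) Hz c Hc); auto. }
  exists y. split; [exact Hdown_y | split].
  - intros z Hz. split.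
    + intros c Hc. symmetry. exact (agree_y z (HX z Hz) c Hc).
    + rewrite y_at. apply Hs_ub. eauto.
  - intros z Hz Hz_ub.
    assert (Hsz : prec a (s a) (z a)).
    { apply Hs_least. intros t [w [Hw <-]]. apply Hz_ub; exact Hw. }
    split.
    + split; [exact (agree_y z Hz) | rewrite y_at; exact Hsz].
    + intro d. destruct (lt_total d a) as [Hd | [-> | Hd]].
      * rewrite (agree_y z Hz d Hd). apply le_refl.
      * rewrite y_at. apply prec_le. exact Hsz.
      * rewrite y_above by exact Hd. apply Hbot.
Qed.

(* Necessity: apply Axiom 3 to X = {w}, where w and z differ only at α with
   w(α) = u ⪯ v = z(α); the resulting y has y(α) = u and y ≤ z. *)
Lemma prec_le_of_axiom3 (base : prodT L) :
  Axiom3 lt L le prec -> forall a u v, prec a u v -> le a u v.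
Proof.
  intros A3 a u v Huv.
  pose (w := update base a u). pose (z := update base a v).
  assert (wz_below : forall c, lt c a -> w c = z c).
  { intros c Hc.
    assert (Hac : a <> c) by (intros Hac; rewrite Hac in Hc; exact (lt_irrefl c Hc)).
    unfold w, z. rewrite !update_other by exact Hac. reflexivity. }
  assert (Hdown_w : down lt L prec w a w) by (apply down_agree_below; auto).
  destruct (A3 w a (fun t => t = w)) as [y [_ [Hy_ub Hy_least]]].
  { intros t ->. exact Hdown_w. }
  assert (y_at : y a = u).
  { destruct (Hy_least w Hdown_w) as [[_ Hyw] _].
    { intros t ->. split; auto. }
    destruct (Hy_ub w eq_refl) as [_ Hwy].
    unfold w in Hyw, Hwy. rewrite update_same in Hyw, Hwy. auto. }
  destruct (Hy_least z) as [_ Hyz].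
  - apply down_agree_below. intros c Hc. symmetry. auto.
  - intros t ->. split; [exact wz_below | unfold w, z; rewrite !update_same; exact Huv].
  - specialize (Hyz a). unfold z in Hyz. rewrite update_same, y_at in Hyz. exact Hyz.
Qed.

End LexProduct.

Theorem mainTheorem14
  (I : Type) (lt : I -> I -> Prop) (Hwo : is_wellorder I lt) (Hne : inhabited I)
  (L : I -> Type) (le prec : forall a, L a -> L a -> Prop)
  (Hle : forall a, complete_lattice_order (le a))
  (Hprec : forall a, complete_lattice_order (prec a)) :
  (Axiom1 lt L prec /\ Axiom2 lt L prec /\ Axiom4 lt L le prec) /\
  (Axiom3 lt L le prec <->
     (forall (a : I) (u v : L a), prec a u v -> le a u v)).
Proof.
  destruct Hwo as [lt_irrefl [lt_trans [lt_total _]]].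
  assert (le_refl : forall a t, le a t t) by (intro a; apply (Hle a)).
  assert (le_antisym : forall a t u, le a t u -> le a u t -> t = u) by (intro a; apply (Hle a)).
  assert (prec_refl : forall a t, prec a t t) by (intro a; apply (Hprec a)).
  assert (prec_antisym : forall a t u, prec a t u -> prec a u t -> t = u)
    by (intro a; apply (Hprec a)).
  assert (prec_sup : forall a (S : L a -> Prop), exists s, is_lub (prec a) S s)
    by (intro a; apply (Hprec a)).
  (* The ≤-supremum of the empty set is a least element of each factor. *)
  assert (le_bottom : forall a, exists b, forall t, le a b t).
  { intro a. destruct (proj2 (proj2 (proj2 (Hle a))) (fun _ => False)) as [b [_ Hb]].
    exists b. intro t. apply Hb. contradiction. }
  destruct (pointwise_choice _ le_bottom) as [base _].
  split; [split; [|split] | split].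
  - apply axiom1_holds; assumption.
  - apply axiom2_holds; assumption.
  - apply axiom4_holds; assumption.
  - apply prec_le_of_axiom3; assumption.
  - apply axiom3_of_prec_le; assumption.
Qed.
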